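(* Let $g$ be a function such that for every real $c\geq 1$, every finite graph $G$ with growth $f_G(r)\leq cr$ for all positive integers $r$ has $\operatorname{tw}(G)\leq g(c)$. Then $g(c)\in\Omega(c\log c)$ (as $c\to\infty$).
   Context: $\log$ is the natural logarithm. The growth of a finite graph $G$ is the function $f_G\colon\mathbb{N}\to\mathbb{N}$ where $f_G(r)$ is the maximum of $|V(H)|$ over all subgraphs $H$ of $G$ of radius at most $r$. $\operatorname{tw}(G)$ denotes the treewidth of $G$: the minimum, over tree-decompositions $(B_x: x\in V(T))$ of $G$ (bags indexed by a tree $T$, each edge in some bag, each vertex's bags forming a non-empty subtree), of the maximum bag size minus $1$. *)

From HB Require Import structures.
From mathcomp Require Import all_boot all_order all_algebra.
From mathcomp Require Import all_classical all_reals all_analysis.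
Set Implicit Arguments. Unset Strict Implicit. Unset Printing Implicit Defensive.
Import Order.TTheory GRing.Theory Num.Theory.

Definition simple_graph (T : finType) (e : rel T) : Prop :=
  symmetric e /\ irreflexive e.

Fixpoint ball (T : finType) (adj : rel T) (v : T) (r : nat) : {set T} :=
  match r with
  | 0 => [set v]
  | r'.+1 => ball adj v r' :|: [set y | [exists x in ball adj v r', adj x y]]
  end.

(* A subgraph H = (S, F) of G: S a vertex subset, F a set of (ordered
   representatives of) edges of G with both ends in S.  Its adjacency is
   the symmetric closure of F. *)
Definition sub_edges (T : finType) (e : rel T) (S : {set T}) (F : {set T * T}) : bool :=
  F \subset [set p | [&& e p.1 p.2, p.1 \in S & p.2 \in S]].

Definition sub_adj (T : finType) (F : {set T * T}) : rel T :=
  fun x y => ((x, y) \in F) || ((y, x) \in F).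

Definition radius_le (T : finType) (S : {set T}) (F : {set T * T}) (r : nat) : bool :=
  [exists v in S, S \subset ball (sub_adj F) v r].

Definition growth (T : finType) (e : rel T) (r : nat) : nat :=
  \max_(S : {set T} | [exists F : {set T * T}, sub_edges e S F && radius_le S F r]) #|S|.

Definition is_tree (I : finType) (t : rel I) : Prop :=
  [/\ symmetric t, irreflexive t, #|I| > 0,
      (forall x y : I, connect t x y) &
      (forall c : seq I, ucycle t c -> size c <= 2)].

Definition tree_decomposition (T : finType) (e : rel T)
    (I : finType) (t : rel I) (B : I -> {set T}) : Prop :=
  [/\ is_tree t,
      (forall u v : T, e u v -> exists x : I, (u \in B x) && (v \in B x)) &
      (forall v : T, (exists x : I, v \in B x) /\
         forall x y : I, v \in B x -> v \in B y ->
           connect [rel a b | [&& t a b, v \in B a & v \in B b]] x y)].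

Definition td_width (T : finType) (I : finType) (B : I -> {set T}) : int :=
  (\max_(x : I) #|B x|)%:Z - 1.

(* "tw(G) <= k": since tw(G) is the minimum width over all tree
   decompositions, tw(G) <= k iff some tree decomposition has width <= k. *)
Definition tw_le (R : realType) (T : finType) (e : rel T) (k : R) : Prop :=
  exists (I : finType) (t : rel I) (B : I -> {set T}),
    tree_decomposition e t B /\ ((td_width B)%:~R <= k)%R.

(* For each L, a counting argument yields 48 permutations of a set of n = 6 * 97^L
   points such that, for all sets A and C of n/6 points, one of them maps a point
   of A into C.  Joining each point to its images gives a graph of maximum degree
   96 in which any two disjoint sets of n/6 vertices are adjacent.  Its balls of
   radius r have at most 97^r vertices, so its growth is at most (n / L) r.  In a
   tree decomposition with all bags smaller than n/2, at every node some branch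
   would hold n/6 vertices outside the bag; following these heavy branches gives a
   walk in the tree that never turns back, hence a cycle.  So tw > n/2 - 1, and
   choosing L of order log c with n / L of order c gives g(c) >= c log c / K. *)

From Pilot Require Import Defs.
From HB Require Import structures.
(* The finite-set libraries are imported after analysis so that their names
   (set0, subsetP, setDE, ...) shadow the classical-set ones. *)
From mathcomp Require Import all_classical all_reals all_analysis.
From mathcomp Require Import all_boot all_order all_algebra all_fingroup.
From mathcomp Require Import zify ring lra.
Import Order.TTheory GRing.Theory Num.Theory.
Set Implicit Arguments. Unset Strict Implicit. Unset Printing Implicit Defensive.

Section Trees.
Variables (I : finType) (t : rel I).
Hypotheses (t_sym : symmetric t) (t_irr : irreflexive t).
Hypothesis t_acyclic : forall c : seq I, ucycle t c -> size c <= 2.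

Lemma tree_edge_bridge (r : rel I) a b :
  subrel r t -> ~~ r a b -> t a b -> ~ connect r a b.
Proof.
move=> rt nrab tab /connectP[p rp bE]; subst b.
case: (shortenP rp) nrab tab => p' rp' up' _ nrab tab.
have := t_acyclic (c := a :: p'); rewrite /ucycle up' andbT /=.
rewrite rcons_path (sub_path rt rp') /= t_sym tab.
case: p' rp' up' nrab tab => [|y [|z q]] /=.
- by rewrite t_irr.
- by move=> /andP[-> _].
- by move=> _ _ _ _ /(_ isT).
Qed.

Definition avoiding (x : I) : rel I := [rel a b | [&& t a b, a != x & b != x]].

Definition branch (x y : I) : {set I} := [set z | connect (avoiding x) y z].

Lemma avoiding_sym x : symmetric (avoiding x).
Proof. by move=> a b; rewrite /avoiding /= [t a b]t_sym [(a != x) && _]andbC. Qed.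

Lemma subrel_connect (r r' : rel I) : subrel r r' -> subrel (connect r) (connect r').
Proof. by move=> rr' u v; apply: connect_sub => p q /rr'; apply: connect1. Qed.

Definition remove_edge (x y : I) : rel I :=
  [rel u v | [&& t u v, (u, v) != (x, y) & (u, v) != (y, x)]].

Lemma remove_edge_sym x y : symmetric (remove_edge x y).
Proof.
move=> u v; rewrite /remove_edge /= [t u v]t_sym !xpair_eqE; congr (_ && _).
by rewrite andbC [(v == x) && _]andbC [(v == y) && _]andbC.
Qed.

Lemma remove_edge_cut x y : t x y -> ~ connect (remove_edge x y) x y.
Proof.
move=> txy; apply: tree_edge_bridge txy; first by move=> u v /andP[].
by rewrite /remove_edge /= eqxx andbF.
Qed.

Lemma avoiding_remove_edge x y w :
  w \in [:: x; y] -> subrel (avoiding w) (remove_edge x y).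
Proof.
move=> wxy u v /and3P[tuv uw vw]; rewrite /remove_edge /= tuv !xpair_eqE.
by move: wxy; rewrite !inE => /orP[] /eqP wE; subst w;
  rewrite (negbTE uw) (negbTE vw) !andbF.
Qed.

Lemma disjoint_branch_edge x y : t x y -> [disjoint branch x y & branch y x].
Proof.
move=> txy; apply/pred0P => z /=; apply/negP => /andP[].
rewrite !inE => cyz cxz; apply: (remove_edge_cut txy).
have connect_sub w : w \in [:: x; y] ->
    subrel (connect (avoiding w)) (connect (remove_edge x y)).
  by move=> wxy; apply/subrel_connect/avoiding_remove_edge.
apply: connect_trans (connect_sub y _ _ _ cxz) _; first by rewrite !inE eqxx orbT.
rewrite (sym_connect_sym (remove_edge_sym x y)).
by apply: connect_sub cyz; rewrite inE eqxx.
Qed.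

Lemma disjoint_branch_nbr x y y' : t x y -> t x y' -> y != y' ->
  [disjoint branch x y & branch x y'].
Proof.
move=> txy txy' nyy; apply/pred0P => z /=; apply/negP => /andP[].
rewrite !inE => cyz cyz'; apply: (remove_edge_cut txy').
have cyy' : connect (avoiding x) y y'.
  by apply: connect_trans cyz _; rewrite (sym_connect_sym (avoiding_sym x)).
have rxy : remove_edge x y' x y.
  have nxy : x != y by apply: contraTneq txy => ->; rewrite t_irr.
  rewrite /remove_edge /= txy !xpair_eqE eqxx (negbTE nyy) [y == x]eq_sym (negbTE nxy).
  by rewrite !andbF.
apply: connect_trans (connect1 rxy) _.
by apply: subrel_connect cyy'; apply: avoiding_remove_edge; rewrite inE eqxx.
Qed.

Lemma path_avoiding x y q : path t y q -> x \notin y :: q -> path (avoiding x) y q.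
Proof.
elim: q y => [|z q IH] y //= /andP[tyz pq]; rewrite !inE negb_or => /andP[xy].
rewrite negb_or => /andP[xz xq]; rewrite /avoiding /= tyz eq_sym xy eq_sym xz /=.
by apply: IH; rewrite // inE negb_or xz.
Qed.

Hypothesis t_connected : forall x y : I, connect t x y.

Lemma mem_branch_nbr x z : z != x -> exists2 y, t x y & z \in branch x y.
Proof.
move=> zx; case/connectP: (t_connected x z) => p tp zE.
case: (shortenP tp) zE => p' tp' up' _ zE.
case: p' tp' up' zE => [|y q] /=; first by move=> _ _ zE; rewrite zE eqxx in zx.
move=> /andP[txy tq] /andP[xyq _] zE; exists y => //.
by rewrite inE; apply/connectP; exists q => //; apply: path_avoiding.
Qed.

End Trees.

Lemma exists_long_ucycle (I : finType) (t : rel I) (f : I -> I) (x0 : I) :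
  irreflexive t -> (forall x, t x (f x)) -> (forall x, f (f x) != x) ->
  exists2 c, ucycle t c & 2 < size c.
Proof.
move=> t_irr tf nff.
set y := iter (fingraph.order f x0) f x0.
have fy : fconnect f x0 y := fconnect_iter f _ x0.
set i := findex f x0 y.
have ilt : i < fingraph.order f x0 := findex_max fy.
set z := iter i f x0.
(* [z] lies on the cycle into which the orbit of [x0] eventually falls. *)
have zE : iter (fingraph.order f x0 - i).-1.+1 f z = z.
  rewrite prednK ?subn_gt0 // /z -iterD subnK ?(ltnW ilt) //.
  by rewrite (iter_findex fy).
have cz : fcycle f (fingraph.orbit f z).
  by apply/(orbitPcycle 0 3); exists (fingraph.order f x0 - i).-1.
exists (fingraph.orbit f z).
  by rewrite /ucycle orbit_uniq andbT (sub_cycle _ cz) // => a b /eqP <-.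
move: cz; rewrite size_orbit /fingraph.orbit.
case Eo: (fingraph.order f z) => [|[|[|k]]] //.
- by have := fingraph.order_gt0 f z; rewrite Eo.
- by rewrite /= andbT => /eqP fz; have := tf z; rewrite fz t_irr.
- by rewrite /= => /and3P[_ /eqP ffz _]; have := nff z; rewrite ffz eqxx.
Qed.

Lemma bigcup_card_window (I T : finType) (P : I -> {set T}) (m : nat) (Y : {set I}) :
  0 < m -> (forall y, y \in Y -> #|P y| < m) -> m <= #|\bigcup_(y in Y) P y| ->
  exists2 J : {set I}, J \subset Y & m <= #|\bigcup_(y in J) P y| < 2 * m.
Proof.
move=> m_gt0; move: {2}#|Y| (leqnn #|Y|) => n; elim: n Y => [|n IH] Y.
  rewrite leqn0 => /eqP/cards0_eq -> _; rewrite big_set0 cards0.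
  by rewrite leqNgt m_gt0.
move=> card_Y small big.
case: (ltnP #|\bigcup_(y in Y) P y| (2 * m)) => [|ge2m]; first by exists Y; rewrite ?big.
case: (set_0Vmem Y) => [Y0|[y yY]].
  by move: big; rewrite Y0 big_set0 cards0 leqNgt m_gt0.
have card_Yy : #|Y :\ y| <= n by move: card_Y; rewrite (cardsD1 y Y) yY.
have small_Yy z : z \in Y :\ y -> #|P z| < m by rewrite inE => /andP[_]; apply: small.
have big_Yy : m <= #|\bigcup_(z in Y :\ y) P z|.
  rewrite (big_setD1 y yY) /= in ge2m.
  have := leq_trans ge2m (leq_card_setU _ _); have := small y yY.
  rewrite mul2n -addnn => Py_lt ge2m'; rewrite -(leq_add2l #|P y|).
  by apply: leq_trans ge2m'; rewrite leq_add2r ltnW.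
have [J JY window] := IH _ card_Yy small_Yy big_Yy.
by exists J => //; apply: subset_trans JY (subsetDl _ _).
Qed.

Definition set_linked (T : finType) (e : rel T) (m : nat) : Prop :=
  forall A C : {set T}, [disjoint A & C] -> m <= #|A| -> m <= #|C| ->
    exists a c, [/\ a \in A, c \in C & e a c].

Lemma set_linked_gt0 (T : finType) (e : rel T) m : set_linked e m -> 0 < m.
Proof.
move=> linked; rewrite lt0n; apply/negP => /eqP m0.
have disj0 : [disjoint set0 & set0 :> {set T}].
  by apply/pred0P => v; rewrite /= inE.
have card0 : m <= #|(set0 : {set T})| by rewrite m0.
by have [a [c [/[!inE]]]] := linked _ _ disj0 card0 card0.
Qed.

Section TreeDecomposition.
Variables (T I : finType) (e : rel T) (t : rel I) (B : I -> {set T}).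
Hypothesis td : tree_decomposition e t B.

Definition td_part (x y : I) : {set T} :=
  [set v | (v \notin B x) && [exists z, (z \in branch t x y) && (v \in B z)]].

Lemma td_part_bag x y v z : v \in td_part x y -> v \in B z -> z \in branch t x y.
Proof.
case: td => _ _ td_subtree; rewrite inE => /andP[vx /existsP[z0 /andP[z0y vz0]]] vz.
rewrite inE in z0y; rewrite inE; apply: (connect_trans z0y).
apply: connect_sub ((td_subtree v).2 z0 z vz0 vz) => a b /and3P[tab va vb].
have ax : a != x by apply: contraNneq vx => <-.
have bx : b != x by apply: contraNneq vx => <-.
by apply: connect1; rewrite /avoiding /= tab ax bx.
Qed.

Lemma td_part_cover x v : v \notin B x -> exists2 y, t x y & v \in td_part x y.
Proof.
case: td => [[_ _ _ t_connected _]] _ td_subtree vx.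
have [[z vz] _] := td_subtree v.
have zx : z != x by apply: contraNneq vx => <-.
have [y txy zy] := mem_branch_nbr t_connected zx.
by exists y; rewrite // inE vx; apply/existsP; exists z; rewrite zy vz.
Qed.

Lemma td_part_edge x y x' y' a c : a \in td_part x y -> c \in td_part x' y' ->
  e a c -> exists2 z, z \in branch t x y & z \in branch t x' y'.
Proof.
case: td => _ td_edge _ pa pc /td_edge[z /andP[az cz]].
by exists z; [apply: td_part_bag pa az | apply: td_part_bag pc cz].
Qed.

Lemma td_part_edge_nbr x y y' a c : t x y -> t x y' ->
  a \in td_part x y -> c \in td_part x y' -> e a c -> y = y'.
Proof.
case: td => [[t_sym t_irr _ _ t_acyclic]] _ _ txy txy' pa pc eac.
apply/eqP/negPn/negP => nyy; have [z zy zy'] := td_part_edge pa pc eac.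
have /pred0P/(_ z) := disjoint_branch_nbr t_sym t_irr t_acyclic txy txy' nyy.
by rewrite /= zy zy'.
Qed.

Lemma td_part_edge_back x y a c : t x y ->
  a \in td_part x y -> c \in td_part y x -> ~ e a c.
Proof.
case: td => [[t_sym t_irr _ _ t_acyclic]] _ _ txy pa pc eac.
have [z zxy zyx] := td_part_edge pa pc eac.
have /pred0P/(_ z) := disjoint_branch_edge t_sym t_irr t_acyclic txy.
by rewrite /= zxy zyx.
Qed.

Lemma disjoint_td_part_back x y : t x y -> [disjoint td_part x y & td_part y x].
Proof.
case: td => [[t_sym t_irr _ _ t_acyclic]] _ _ txy.
apply/pred0P => v /=; apply/negP => /andP[vxy vyx].
move: (vxy); rewrite inE => /andP[_ /existsP[z /andP[zxy vz]]].
have /pred0P/(_ z) := disjoint_branch_edge t_sym t_irr t_acyclic txy.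
by rewrite /= zxy (td_part_bag vyx vz).
Qed.

Variable m : nat.
Hypothesis linked : set_linked e m.

Lemma td_heavy_part_back x y : t x y ->
  m <= #|td_part x y| -> m <= #|td_part y x| -> False.
Proof.
move=> txy mxy myx.
have [a [c [pa pc]]] := linked (disjoint_td_part_back txy) mxy myx.
exact: td_part_edge_back pa pc.
Qed.

Hypothesis small_bags : forall x, #|B x| + 3 * m <= #|T|.

(* Otherwise a greedy union of light parts at [x] would be a set of size in
   [m, 2m) with no edge to the at least [m] remaining vertices outside [B x]. *)
Lemma td_heavy_part x : exists2 y, t x y & m <= #|td_part x y|.
Proof.
case: (boolP [exists y, t x y && (m <= #|td_part x y|)]) => [/existsP[y /andP[]]|];
  first by exists y.
rewrite negb_exists => /forallP light.
have m_gt0 := set_linked_gt0 linked.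
pose Y := [set y | t x y].
have light_Y y : y \in Y -> #|td_part x y| < m.
  by rewrite inE ltnNge => txy; have := light y; rewrite txy.
have parts_cover : \bigcup_(y in Y) td_part x y = ~: B x.
  apply/setP => v; rewrite in_setC; apply/bigcupP/idP => [[y _]|vx].
    by rewrite inE => /andP[].
  by have [y txy vy] := td_part_cover vx; exists y; rewrite // inE.
have out_B : 3 * m <= #|~: B x| by rewrite -(leq_add2l #|B x|) cardsC.
have [J JY /andP[mU U2m]] : exists2 J : {set I}, J \subset Y &
    m <= #|\bigcup_(y in J) td_part x y| < 2 * m.
  apply: (bigcup_card_window m_gt0 light_Y).
  by rewrite parts_cover (leq_trans _ out_B) ?leq_pmull.
set U := \bigcup_(y in J) td_part x y in mU U2m.
set C := ~: B x :\: U.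
have mC : m <= #|C|.
  have /subset_leq_card UI : ~: B x :&: U \subset U by apply: subsetIr.
  rewrite cardsD leq_subRL ?subset_leq_card ?subsetIl //.
  by apply: leq_trans out_B; lia.
have UC : [disjoint U & C].
  by rewrite disjoint_sym disjoints_subset /C setDE subsetIr.
have [a [c [/bigcupP[y yJ pa] cC eac]]] := linked UC mU mC.
move: cC; rewrite !inE => /andP[cU cx].
have [y' txy' pc] := td_part_cover cx.
have txy : t x y by have := subsetP JY y yJ; rewrite inE.
have yy' := td_part_edge_nbr txy txy' pa pc eac.
by case/negP: cU; apply/bigcupP; exists y; rewrite // yy'.
Qed.

Lemma td_small_bags_contra : False.
Proof.
case: td => [[_ t_irr t_ne _ t_acyclic]] _ _.
pose f x := odflt x [pick y | t x y && (m <= #|td_part x y|)].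
have fP x : t x (f x) && (m <= #|td_part x (f x)|).
  rewrite /f; case: pickP => [y //|none].
  by have [y txy my] := td_heavy_part x; have := none y; rewrite txy my.
have nff x : f (f x) != x.
  apply/eqP => ffx; have /andP[txf mxf] := fP x; have /andP[_] := fP (f x).
  by rewrite ffx; apply: td_heavy_part_back txf mxf.
case/card_gt0P: t_ne => x0 _.
have [c c_cycle c_long] := exists_long_ucycle x0 t_irr (fun x => (andP (fP x)).1) nff.
by have := t_acyclic c c_cycle; rewrite leqNgt c_long.
Qed.

End TreeDecomposition.

Theorem td_big_bag (T I : finType) (e : rel T) (t : rel I) (B : I -> {set T}) m :
  tree_decomposition e t B -> set_linked e m -> exists x, #|T| < #|B x| + 3 * m.
Proof.
move=> td linked; case: (boolP [exists x, #|T| < #|B x| + 3 * m]) => [/existsP //|].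
rewrite negb_exists => /forallP small; exfalso.
by apply: (td_small_bags_contra td linked) => x; rewrite leqNgt small.
Qed.

Lemma card_bigcup_leq_sum (I T : finType) (P : {pred I}) (F : I -> {set T}) :
  #|\bigcup_(i in P) F i| <= \sum_(i in P) #|F i|.
Proof.
elim/big_rec2: _ => [|i n U _ h]; first by rewrite cards0.
by apply: leq_trans (leq_card_setU _ _) _; rewrite leq_add2l.
Qed.

Section AvoidingPerms.
Variable T : finType.

Lemma perm_imset_card_eq (C C' : {set T}) :
  #|C| = #|C'| -> exists tau : {perm T}, tau @: C = C'.
Proof.
move: {2}#|C :\: C'| (leqnn #|C :\: C'|) => k; elim: k C => [|k IH] C.
  rewrite leqn0 cards_eq0 setD_eq0 => CC' eqc; exists 1%g; rewrite imset_perm1.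
  by apply/eqP; rewrite eqEcard CC' eqc leqnn.
move=> hk eqc; case: (set_0Vmem (C :\: C')) => [CC'|[c cD]].
  by apply: IH; rewrite // CC' cards0.
have [c' c'D] : exists c', c' \in C' :\: C.
  apply/card_gt0P; move: eqc; rewrite -(cardsID C' C) -(cardsID C C') setIC.
  by move/addnI <-; apply/card_gt0P; exists c.
move: cD c'D; rewrite !inE => /andP[cC' cC] /andP[c'C c'C'].
(* Swapping [c] and [c'] moves one more point of [C] into [C']. *)
pose D := tperm c c' @: C.
have cardD : #|D| = #|C'| by rewrite card_imset ?eqc //; apply: perm_inj.
have hD : #|D :\: C'| <= k.
  have sub : D :\: C' \subset (C :\: C') :\ c.
    apply/subsetP => _ /setDP[/imsetP[x xC ->] nC].
    have [xc|xc] := eqVneq x c; first by move: nC; rewrite xc tpermL c'C'.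
    have xc' : c' != x by apply: contraNneq c'C => ->.
    have cx : c != x by rewrite eq_sym.
    by move: nC; rewrite (tpermD cx xc') => nC; rewrite !inE xc nC xC.
  apply: leq_trans (subset_leq_card sub) _.
  by move: hk; rewrite (cardsD1 c (C :\: C')) !inE cC cC'.
have [tau' Etau] := IH D hD cardD.
exists (tperm c c' * tau')%g; rewrite -Etau /D -imset_comp.
by apply: eq_imset => x /=; rewrite permM.
Qed.

Definition avoiding_perms (A C : {set T}) : {set {perm T}} :=
  [set p : {perm T} | [disjoint p @: A & C]].

Lemma card_avoiding_perms_le (A C C' : {set T}) :
  #|C| = #|C'| -> #|avoiding_perms A C| <= #|avoiding_perms A C'|.
Proof.
move=> eqc; have [tau Etau] := perm_imset_card_eq eqc.
rewrite -(card_imset (avoiding_perms A C) (@mulIg _ tau)).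
apply: subset_leq_card; apply/subsetP => _ /imsetP[p pS ->].
move: pS; rewrite !inE -Etau.
have -> : (p * tau)%g @: A = tau @: (p @: A).
  by rewrite -imset_comp; apply: eq_imset => x; rewrite permM.
by rewrite imset_disjoint //; apply: perm_inj.
Qed.

Lemma sum_card_avoiding_perms (A : {set T}) (m : nat) :
  \sum_(C in [set C : {set T} | #|C| == m]) #|avoiding_perms A C| =
  #|{perm T}| * 'C(#|T| - #|A|, m).
Proof.
transitivity (\sum_(C in [set C : {set T} | #|C| == m])
               \sum_(p : {perm T}) (p \in avoiding_perms A C : nat)).
  by apply: eq_bigr => C _; rewrite -sum1_card big_mkcond.
rewrite exchange_big /= -sum_nat_const; apply: eq_bigr => p _.
rewrite -big_mkcondr /= sum1dep_card.
have -> : [set C | (C \in [set C : {set T} | #|C| == m]) &&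
                   (p \in avoiding_perms A C)] =
          [set C : {set T} | C \subset ~: (p @: A) & #|C| == m].
  by apply/setP => C; rewrite !inE disjoint_sym disjoints_subset andbC.
rewrite cards_draws; congr 'C(_, _).
by rewrite -(cardsC (p @: A)) card_imset ?addKn //; apply: perm_inj.
Qed.

Lemma card_avoiding_perms (A C : {set T}) :
  #|avoiding_perms A C| * 'C(#|T|, #|C|) = #|{perm T}| * 'C(#|T| - #|A|, #|C|).
Proof.
rewrite -sum_card_avoiding_perms -card_draws mulnC -sum_nat_const.
apply: eq_bigr => C' /[!inE] /eqP c'C.
by apply/eqP; rewrite eqn_leq !card_avoiding_perms_le.
Qed.

End AvoidingPerms.

Lemma ffact_ratio a b m j : a <= b -> b ^ j * (a * m) ^_ j <= a ^ j * (b * m) ^_ j.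
Proof.
move=> ab; elim: j => [|j IH]; first by rewrite !ffactn0.
rewrite !ffactnSr !expnS.
have step : b * (a * m - j) <= a * (b * m - j) by nia.
move: (leq_mul IH step).
move: (b ^ j) (a ^ j) ((a * m) ^_ j) ((b * m) ^_ j) (a * m - j) (b * m - j).
by move=> u v x y w z; nia.
Qed.

Lemma bin_ratio a b m : a <= b -> b ^ m * 'C(a * m, m) <= a ^ m * 'C(b * m, m).
Proof.
move=> ab; rewrite -(leq_pmul2r (fact_gt0 m)) -!mulnA !bin_ffact.
exact: ffact_ratio.
Qed.

Lemma card_avoiding_perms_ratio (T : finType) (A C : {set T}) b m :
  #|T| = b * m -> #|A| = m -> #|C| = m ->
  #|avoiding_perms A C| * b ^ m <= #|{perm T}| * b.-1 ^ m.
Proof.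
move=> cT cA cC; have := card_avoiding_perms A C; rewrite cT cA cC.
have -> : b * m - m = b.-1 * m by rewrite -subn1 mulnBl mul1n.
have bin_gt0 : 0 < 'C(b * m, m) by rewrite bin_gt0 -cT -cA max_card.
move=> eq_card; rewrite -(leq_pmul2r bin_gt0) mulnAC eq_card -!mulnA leq_mul2l.
by rewrite mulnC bin_ratio ?leq_pred ?orbT.
Qed.

Lemma card_hitting_ineq m : 0 < m ->
  2 ^ (6 * m) * 2 ^ (6 * m) * 5 ^ (m * 48) < 6 ^ (m * 48).
Proof.
move=> m_gt0.
have -> : 2 ^ (6 * m) * 2 ^ (6 * m) = (2 ^ 12) ^ m.
  by rewrite -expnD -expnM; congr (_ ^ _); lia.
have exp48 a : a ^ (m * 48) = ((a ^ 4) ^ 12) ^ m.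
  by rewrite -!expnM; congr (_ ^ _); lia.
rewrite !exp48 -expnMn (ltn_exp2r _ _ m_gt0) -expnMn.
by rewrite (ltn_exp2r _ _ (isT : 0 < 12)).
Qed.

Definition hitting_perms (T : finType) k (s : {ffun 'I_k -> {perm T}}) m : Prop :=
  forall A C : {set T}, #|A| = m -> #|C| = m ->
    exists i, ~~ [disjoint s i @: A & C].

(* Counting: for fixed [m]-sets [A] and [C], a uniformly random permutation maps [A]
   off [C] with probability at most [(5/6)^m], while there are at most [2^(6m)] such
   sets. *)
Lemma exists_hitting_perms (T : finType) m : 0 < m -> #|T| = 6 * m ->
  exists s : {ffun 'I_48 -> {perm T}}, hitting_perms s m.
Proof.
move=> m_gt0 cT.
pose Am := [set A : {set T} | #|A| == m].
pose avoid_all A C :=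
  [set s : {ffun 'I_48 -> {perm T}} | [forall i, s i \in avoiding_perms A C]].
pose bad := \bigcup_(A in Am) \bigcup_(C in Am) avoid_all A C.
pose P := #|{perm T}|.
have P_gt0 : 0 < P by apply/card_gt0P; exists 1%g.
have card_Am : #|Am| <= 2 ^ (6 * m).
  rewrite -cT -cardsT -card_powerset subset_leq_card //.
  by apply/subsetP => C _; rewrite powersetE subsetT.
have avoid_all_small A C : A \in Am -> C \in Am ->
    #|avoid_all A C| * 6 ^ (m * 48) <= P ^ 48 * 5 ^ (m * 48).
  rewrite !inE => /eqP cA /eqP cC.
  have -> : #|avoid_all A C| = #|avoiding_perms A C| ^ 48.
    rewrite -[in RHS](card_ord 48) -card_ffun_on; apply: eq_card => s.
    by rewrite inE; apply/forallP/ffun_onP.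
  by rewrite !expnM -!expnMn leq_exp2r // card_avoiding_perms_ratio.
have bad_small : #|bad| * 6 ^ (m * 48) < P ^ 48 * 6 ^ (m * 48).
  apply: (@leq_ltn_trans (#|Am| * #|Am| * (P ^ 48 * 5 ^ (m * 48)))).
    apply: leq_trans (leq_mul (card_bigcup_leq_sum _ _) (leqnn _)) _.
    rewrite big_distrl -mulnA -sum_nat_const; apply: leq_sum => A A_m.
    apply: leq_trans (leq_mul (card_bigcup_leq_sum _ _) (leqnn _)) _.
    rewrite big_distrl -sum_nat_const; apply: leq_sum => C C_m.
    exact: avoid_all_small.
  apply: leq_ltn_trans (leq_mul (leq_mul card_Am card_Am) (leqnn _)) _.
  rewrite mulnCA ltn_pmul2l; first exact: card_hitting_ineq.
  by rewrite expn_gt0 P_gt0.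
have [s _ s_good] : exists2 s, s \in setT & s \notin bad.
  apply/subsetPn; move: bad_small; rewrite ltn_pmul2r ?expn_gt0 //.
  by apply: contraTN => /subset_leq_card; rewrite cardsT card_ffun card_ord -leqNgt.
exists s => A C cA cC.
case: (boolP [forall i, s i \in avoiding_perms A C]) => [avoid|/forallPn[i]].
  case/negP: s_good; apply/bigcupP; exists A; rewrite ?inE ?cA //.
  by apply/bigcupP; exists C; rewrite ?inE ?cC.
by rewrite inE; exists i.
Qed.

Section Growth.
Variable T : finType.

Lemma ball_subrel (adj adj' : rel T) v r :
  subrel adj adj' -> Defs.ball adj v r \subset Defs.ball adj' v r.
Proof.
move=> sub; elim: r => [|r IH] //=.
apply/subsetP => y; rewrite !inE => /orP[yb|/existsP[x /andP[xb axy]]].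
  by rewrite (subsetP IH y yb).
by apply/orP; right; apply/existsP; exists x; rewrite (subsetP IH x xb) sub.
Qed.

Lemma card_ball (adj : rel T) D v r :
  (forall x, #|[set y | adj x y]| <= D) -> #|Defs.ball adj v r| <= D.+1 ^ r.
Proof.
move=> deg; elim: r => [|r IH] /=; first by rewrite cards1.
set X := Defs.ball adj v r in IH *.
have sub : [set y | [exists x in X, adj x y]] \subset
    \bigcup_(x in X) [set y | adj x y].
  apply/subsetP => y; rewrite inE => /existsP[x /andP[xX axy]].
  by apply/bigcupP; exists x; rewrite ?inE.
have next : #|[set y | [exists x in X, adj x y]]| <= #|X| * D.
  apply: leq_trans (subset_leq_card sub) (leq_trans (card_bigcup_leq_sum _ _) _).
  by rewrite -sum_nat_const; apply: leq_sum => x _.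
apply: leq_trans (leq_card_setU _ _) _.
rewrite expnS mulSn leq_add //; apply: leq_trans next _.
by rewrite mulnC leq_mul.
Qed.

Lemma growth_le_degree (e : rel T) D r : symmetric e ->
  (forall x, #|[set y | e x y]| <= D) -> growth e r <= minn (D.+1 ^ r) #|T|.
Proof.
move=> e_sym deg; apply/bigmax_leqP => S.
case/existsP => F /andP[sF /existsP[v /andP[vS Sb]]].
rewrite leq_min max_card andbT.
have sub_e : subrel (sub_adj F) e.
  move=> x y /orP[] /(subsetP sF); rewrite inE /= => /and3P[exy _ _] //.
  by rewrite e_sym.
apply: leq_trans (subset_leq_card Sb) _.
apply: leq_trans (subset_leq_card (ball_subrel v r sub_e)) _.
exact: card_ball deg.
Qed.

End Growth.

Section PermGraph.
Variables (T : finType) (k : nat) (s : {ffun 'I_k -> {perm T}}).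

Definition perm_graph : rel T :=
  fun u v => (u != v) && [exists i, (s i u == v) || (s i v == u)].

Lemma perm_graph_simple : simple_graph perm_graph.
Proof.
split=> [u v|u]; last by rewrite /perm_graph eqxx.
by rewrite /perm_graph eq_sym; congr (_ && _); apply: eq_existsb => i; rewrite orbC.
Qed.

Lemma perm_graph_degree x : #|[set y | perm_graph x y]| <= k + k.
Proof.
have sub : [set y | perm_graph x y] \subset
    [set s i x | i : 'I_k] :|: [set (s i)^-1%g x | i : 'I_k].
  apply/subsetP => y; rewrite inE => /andP[_ /existsP[i /orP[] /eqP syx]].
    by rewrite inE; apply/orP; left; apply/imsetP; exists i.
  by rewrite inE; apply/orP; right; apply/imsetP; exists i; rewrite -?syx ?permK.
apply: leq_trans (subset_leq_card sub) (leq_trans (leq_card_setU _ _) _).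
by apply: leq_add; apply: leq_trans (leq_imset_card _ _) _; rewrite card_ord.
Qed.

Lemma perm_graph_linked m : hitting_perms s m -> set_linked perm_graph m.
Proof.
move=> hit A C AC /card_geqP[sa [sa_uniq sa_size sa_sub]].
case/card_geqP=> sc [sc_uniq sc_size sc_sub].
have card_sa : #|[set x in sa]| = m by rewrite cardsE (card_uniqP sa_uniq).
have card_sc : #|[set x in sc]| = m by rewrite cardsE (card_uniqP sc_uniq).
have [i /pred0Pn[_ /andP[/imsetP[a aA ->] ac]]] := hit _ _ card_sa card_sc.
rewrite inE in aA ac; rewrite /= inE in ac.
exists a, (s i a); split; [exact: sa_sub | exact: sc_sub |].
rewrite /perm_graph; apply/andP; split; last by apply/existsP; exists i; rewrite eqxx.
apply/eqP => sia; move/pred0P: AC => /(_ a) /=.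
by rewrite (sa_sub _ aA) sia (sc_sub _ ac).
Qed.

End PermGraph.

Lemma min_expn_mul_le a b L r : 0 < a -> 1 < b -> 0 < r ->
  minn (b ^ r) (a * b ^ L) * L <= a * b ^ L * r.
Proof.
move=> a_gt0 b_gt1 r_gt0; case: (leqP r L) => [rL|Lr]; last first.
  apply: leq_trans (leq_mul (geq_minr _ _) (leqnn L)) _.
  by rewrite leq_mul2l ltnW ?orbT.
have h1 : (L - r).+1 <= b ^ (L - r) := ltn_expl _ b_gt1.
have h2 : L <= r * b ^ (L - r) by nia.
have -> : b ^ L = b ^ r * b ^ (L - r) by rewrite -expnD subnKC.
apply: leq_trans (leq_mul (geq_minl _ _) h2) _.
by move: (b ^ r) (b ^ (L - r)) => x y; nia.
Qed.

Lemma sparse_graph_large_bags L : 0 < L -> exists (T : finType) (e : rel T),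
  [/\ simple_graph e,
      forall r, 0 < r -> growth e r * L <= 6 * 97 ^ L * r &
      forall (I : finType) (t : rel I) (B : I -> {set T}),
        tree_decomposition e t B -> 3 * 97 ^ L < \max_(x : I) #|B x|].
Proof.
move=> L_gt0; have m_gt0 : 0 < 97 ^ L by rewrite expn_gt0.
have [s hit] := exists_hitting_perms m_gt0 (card_ord (6 * 97 ^ L)).
exists 'I_(6 * 97 ^ L), (perm_graph s); split.
- exact: perm_graph_simple.
- move=> r r_gt0.
  have deg x : #|[set y | perm_graph s x y]| <= 96 := perm_graph_degree s x.
  have := growth_le_degree r (perm_graph_simple s).1 deg.
  rewrite card_ord => growth_le.
  apply: leq_trans (leq_mul growth_le (leqnn L)) _.
  exact: min_expn_mul_le.
- move=> I t B td; have [x big_x] := td_big_bag td (perm_graph_linked hit).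
  by rewrite card_ord in big_x; apply: leq_trans (leq_bigmax x); lia.
Qed.

Local Open Scope ring_scope.

Lemma td_width_ge (R : realType) (T I : finType) (B : I -> {set T}) k :
  (k < \max_(x : I) #|B x|)%N -> k%:R <= (td_width B)%:~R :> R.
Proof. by move=> k_lt; rewrite /td_width intrB lerBrDr natr1 ler_nat. Qed.

Lemma exists_growth_scale (R : realType) (c : R) : (6 * 97)%:R <= c ->
  exists L : nat,
    [/\ (0 < L)%N, (6 * 97 ^ L)%:R <= c * L%:R & c * L.+1%:R < (6 * 97 ^ L.+1)%:R].
Proof.
move=> c_ge; have c_gt0 : 0 < c by apply: lt_le_trans c_ge; rewrite ltr0n.
pose P n := (0 < n)%N && (c * n%:R < (6 * 97 ^ n)%:R).
have exP : exists n, P n.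
  have := archi_boundP (ltW c_gt0); set N := Num.Def.archi_bound c => cN.
  exists N.+1; rewrite /P /=; apply: (lt_le_trans (y := N.+1%:R * N.+1%:R)).
    by rewrite ltr_pM2r ?ltr0Sn //; apply: lt_le_trans cN _; rewrite ler_nat.
  rewrite -natrM ler_nat.
  by elim: N.+1 => // n IH; have := ltn_expl n (isT : (1 < 97)%N); rewrite expnS; nia.
case: (ex_minnP exP) => n /andP[n_gt0 Pn] n_min.
have n_gt1 : (1 < n)%N.
  rewrite ltn_neqAle n_gt0 andbT; apply: contraTneq Pn => <-.
  by rewrite mulr1 expn1 -leNgt.
exists n.-1; rewrite prednK; last exact: ltnW.
split=> //; first by rewrite -ltnS prednK.
have : ~~ P n.-1 by apply/negP => /n_min; rewrite leqNgt ltn_predL n_gt0.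
by rewrite /P -ltnS prednK // n_gt1 /= -leNgt.
Qed.

Lemma mul_ln_le (R : realType) (c : R) L : 1 <= c ->
  c * L.+1%:R < (6 * 97 ^ L.+1)%:R -> c * ln c <= 388 * ln 97 * (3 * 97 ^ L)%:R.
Proof.
move=> c_ge1 c_lt.
have ln97_gt0 : 0 < ln (97 : R) by rewrite ln_gt0 // ltr1n.
have c_gt0 : 0 < c by apply: lt_le_trans c_ge1.
have c_le : c <= (97 ^ L.+2)%:R.
  apply: le_trans (ltW (le_lt_trans _ c_lt)) _; first by rewrite ler_peMr ?ler1n ?ltW.
  by rewrite ler_nat [in leqRHS]expnS leq_mul2r orbT.
have ln_c : ln c <= (L%:R + 2) * ln 97.
  have -> : L%:R + 2 = L.+2%:R :> R by rewrite -[L.+2]addn2 natrD.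
  by rewrite mulr_natl -lnXn ?ltr0n // -natrX ler_ln ?posrE ?ltr0n ?expn_gt0.
(* c ln c <= c (L + 2) ln 97 <= 2 c (L + 1) ln 97 < 2 * 582 * 97^L ln 97 *)
move: c_lt ln_c; rewrite [(97 ^ _)%N]expnS -[L.+1%:R]natr1 !natrM.
move: (L%:R : R) ((97 ^ L)%:R : R) (ler0n R L) => l p l_ge0 c_lt ln_c.
have := ler_wpM2l (ltW c_gt0) ln_c.
have := ler_wpM2l (ltW ln97_gt0) (ltW c_lt).
have : c * ln 97 <= c * (l + 1) * ln 97.
  have cu_ge0 : 0 <= c * ln 97 by rewrite mulr_ge0 ?ltW.
  nra.
lra.
Qed.

Theorem theorem8 (R : realType) (g : R -> R) :
  (forall c : R, 1 <= c ->
     forall (T : finType) (e : rel T), simple_graph e ->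
       (forall r : nat, (0 < r)%N -> (growth e r)%:R <= c * r%:R) ->
       tw_le e (g c)) ->
  exists K : R, 0 < K /\
    exists c0 : R, forall c : R, c0 <= c -> K * (c * ln c) <= g c.
Proof.
move=> tw_bound; have ln97_gt0 : 0 < ln (97 : R) by rewrite ln_gt0 // ltr1n.
exists (388 * ln 97)^-1; split; first by rewrite invr_gt0 mulr_gt0.
exists (6 * 97)%:R => c c_ge.
have c_ge1 : 1 <= c by apply: le_trans c_ge; rewrite ler1n.
have [L [L_gt0 L_lower L_upper]] := exists_growth_scale c_ge.
have [T [e [e_simple e_growth e_bags]]] := sparse_graph_large_bags L_gt0.
have growth_le r : (0 < r)%N -> (growth e r)%:R <= c * r%:R.
  move=> r_gt0; have := e_growth r r_gt0.
  rewrite -(ler_nat R) natrM [X in _ <= X]natrM => growth_L.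
  have L_pos : 0 < L%:R :> R by rewrite ltr0n.
  rewrite -(ler_pM2r L_pos); apply: le_trans growth_L _.
  by rewrite mulrAC ler_pM2r ?ltr0n.
have [I [t [B [td width_le]]]] := tw_bound c c_ge1 T e e_simple growth_le.
rewrite mulrC ler_pdivrMr ?mulr_gt0 // [g c * _]mulrC.
apply: le_trans (mul_ln_le c_ge1 L_upper) _.
rewrite ler_pM2l ?mulr_gt0 //.
exact: le_trans (td_width_ge R (e_bags I t B td)) width_le.
Qed.
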